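(* Every cohesive almost zero-dimensional subspace of $\mathfrak C\times\mathbb R$ is nowhere dense in $\mathfrak C\times\mathbb R$.
   Context: $\mathfrak C$ denotes the middle-third Cantor set in $[0,1]$. A subset $A$ of a space $X$ is a C-set in $X$ if $A$ is an intersection of clopen subsets of $X$. A space $X$ is almost zero-dimensional if every point of $X$ has a neighborhood basis consisting of C-sets in $X$. A space $X$ is cohesive if every point $x\in X$ has a neighborhood which contains no non-empty clopen subset of $X$. *)

From Stdlib Require Import Reals.
Open Scope R_scope.

Definition pt := (R * R)%type.
Definition subset (A B : pt -> Prop) : Prop := forall p, A p -> B p.

Definition cantor (x : R) : Prop :=
  exists a : nat -> bool,
    infinite_sum (fun n => (if a n then 2 else 0) / 3 ^ (n + 1)) x.

Definition CxR (p : pt) : Prop := cantor (fst p).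

Definition open2 (U : pt -> Prop) : Prop :=
  forall p, U p -> exists eps, 0 < eps /\
    forall q, Rabs (fst q - fst p) < eps -> Rabs (snd q - snd p) < eps -> U q.

Definition open_in (S A : pt -> Prop) : Prop :=
  subset A S /\ exists U, open2 U /\ forall p, A p <-> (S p /\ U p).

Definition closed_in (S A : pt -> Prop) : Prop :=
  subset A S /\ open_in S (fun p => S p /\ ~ A p).

Definition clopen_in (S A : pt -> Prop) : Prop := open_in S A /\ closed_in S A.

Definition closure_in (S A : pt -> Prop) : pt -> Prop :=
  fun p => S p /\ forall F, closed_in S F -> subset (fun q => S q /\ A q) F -> F p.

Definition interior_in (S A : pt -> Prop) : pt -> Prop :=
  fun p => exists O, open_in S O /\ subset O A /\ O p.

Definition nowhere_dense_in (S A : pt -> Prop) : Prop :=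
  forall p, ~ interior_in S (closure_in S A) p.

Definition nbhd_in (S N : pt -> Prop) (x : pt) : Prop :=
  S x /\ subset N S /\ exists O, open_in S O /\ O x /\ subset O N.

(* C-set in S: an intersection of clopen subsets of S
   (the empty intersection being S itself). *)
Definition C_set_in (S A : pt -> Prop) : Prop :=
  subset A S /\ exists F : (pt -> Prop) -> Prop,
    (forall B, F B -> clopen_in S B) /\
    forall p, S p -> (A p <-> forall B, F B -> B p).

Definition almost_zero_dimensional (S : pt -> Prop) : Prop :=
  forall x U, nbhd_in S U x ->
    exists A, C_set_in S A /\ nbhd_in S A x /\ subset A U.

Definition cohesive (S : pt -> Prop) : Prop :=
  forall x, S x -> exists N, nbhd_in S N x /\
    forall B, clopen_in S B -> subset B N -> ~ (exists p, B p).

(* Suppose the closure of X contains a box of C x R, and take x0 in X there together with a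
   neighbourhood N of x0 witnessing cohesion.  Almost zero-dimensionality gives a C-set
   neighbourhood A of x0 inside a small box.  By density, X has points y above and y' below A;
   being outside the C-set A, each is cut off from A by a clopen set B1, resp. B2, missing a
   small box around it.  Cutting B1 /\ B2 by a vertical strip whose sides lie in gaps of the
   Cantor set and by the horizontal strip between y' and y yields a set that is still clopen in X
   (its horizontal sides run inside the boxes around y and y'), is inside N, and meets A. *)
From Stdlib Require Import Reals Lra Lia Classical.
Open Scope R_scope.

Definition digit_term (a : nat -> bool) (n : nat) : R :=
  (if a n then 2 else 0) / 3 ^ (n + 1).

Fixpoint partial_sum (a : nat -> bool) (k : nat) : R :=
  match k with O => 0 | S k => partial_sum a k + digit_term a k end.

Lemma sum_f_R0_digit_term a n : sum_f_R0 (digit_term a) n = partial_sum a (S n).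
Proof. induction n as [|n IH]; simpl; [ring | rewrite IH; reflexivity]. Qed.

Lemma scaled_partial_sum_integer a k : exists z, 3 ^ k * partial_sum a k = IZR z.
Proof.
  induction k as [|k [z Hz]].
  - exists 0%Z. simpl. ring.
  - exists (3 * z + if a k then 2 else 0)%Z.
    simpl partial_sum. unfold digit_term.
    rewrite plus_IZR, mult_IZR, <- Hz, pow_add.
    assert (3 ^ k <> 0) by (apply pow_nonzero; lra).
    destruct (a k); simpl; field; assumption.
Qed.

Lemma scaled_tail_step a k j :
  3 ^ k * (partial_sum a (S k + j) - partial_sum a k) =
  (3 ^ S k * (partial_sum a (S k + j) - partial_sum a (S k)) + if a k then 2 else 0) / 3.
Proof.
  simpl (partial_sum a (S k)). unfold digit_term. rewrite pow_add.
  assert (3 ^ k <> 0) by (apply pow_nonzero; lra).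
  simpl. field. assumption.
Qed.

Lemma scaled_tail_bounds a j k :
  0 <= 3 ^ k * (partial_sum a (k + j) - partial_sum a k) <= 1.
Proof.
  revert k; induction j as [|j IH]; intro k.
  - rewrite Nat.add_0_r. lra.
  - replace (k + S j)%nat with (S k + j)%nat by lia.
    rewrite scaled_tail_step. specialize (IH (S k)). destruct (a k); lra.
Qed.

Lemma scaled_tail_digit_bounds (a : nat -> bool) (k j : nat) :
  let lo : R := if a k then 2 / 3 else 0 in
  lo <= 3 ^ k * (partial_sum a (k + S j) - partial_sum a k) <= lo + 1 / 3.
Proof.
  cbv zeta. replace (k + S j)%nat with (S k + j)%nat by lia.
  rewrite scaled_tail_step. pose proof (scaled_tail_bounds a j (S k)).
  destruct (a k); lra.
Qed.

Lemma Un_cv_const c : Un_cv (fun _ => c) c.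
Proof.
  intros eps Heps. exists 0%nat. intros n _.
  unfold R_dist. rewrite Rminus_diag, Rabs_R0. exact Heps.
Qed.

Lemma Un_cv_between u l lo hi :
  Un_cv u l -> (forall n, lo <= u n <= hi) -> lo <= l <= hi.
Proof.
  intros Hu Hb. split.
  - apply (Rle_cv_lim (Un := fun _ => lo) (Vn := u)); [apply Hb | apply Un_cv_const | exact Hu].
  - apply (Rle_cv_lim (Un := u) (Vn := fun _ => hi)); [apply Hb | exact Hu | apply Un_cv_const].
Qed.

Lemma cantor_scaled_avoids_middle_third x k : cantor x ->
  exists z, 0 <= 3 ^ k * x - IZR z <= 1 / 3 \/ 2 / 3 <= 3 ^ k * x - IZR z <= 1.
Proof.
  intros [a Ha]. destruct (scaled_partial_sum_integer a k) as [z Hz]. exists z.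
  set (s := partial_sum a k) in *.
  assert (Hcv : Un_cv (fun n => 3 ^ k * (sum_f_R0 (digit_term a) (n + k) - s))
                      (3 ^ k * (x - s))).
  { apply CV_mult; [apply Un_cv_const |].
    apply CV_minus; [apply CV_shift', Ha | apply Un_cv_const]. }
  replace (3 ^ k * x - IZR z) with (3 ^ k * (x - s)) by (rewrite <- Hz; ring).
  destruct (a k) eqn:Hak; [right | left];
    (apply (Un_cv_between _ _ _ _ Hcv); intro n;
     rewrite sum_f_R0_digit_term; replace (S (n + k)) with (k + S n)%nat by lia;
     pose proof (scaled_tail_digit_bounds a k n) as Hb; rewrite Hak in Hb; simpl in Hb;
     fold s in Hb; lra).
Qed.

Lemma not_cantor_mid_third k z x : 3 ^ k * x = IZR z + / 2 -> ~ cantor x.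
Proof.
  intros Hx Hc. destruct (cantor_scaled_avoids_middle_third x k Hc) as [z' Hz'].
  rewrite Hx in Hz'.
  assert (Hd : IZR (z - z') = 3 ^ k * x - IZR z' - / 2) by (rewrite minus_IZR; lra).
  destruct Hz' as [Hz' | Hz'].
  - assert (IZR (-1) < IZR (z - z') < IZR 0) as [H1 H2] by (simpl; lra).
    apply lt_IZR in H1, H2. lia.
  - assert (IZR 0 < IZR (z - z') < IZR 1) as [H1 H2] by (simpl; lra).
    apply lt_IZR in H1, H2. lia.
Qed.

Lemma not_cantor_on_both_sides c g : 0 < g ->
  exists u v, ~ cantor u /\ ~ cantor v /\ c - g < u < c /\ c < v < c + g.
Proof.
  intro Hg.
  destruct (Pow_x_infinity 3) with (b := 2 / g) as [k Hk]; [rewrite Rabs_right; lra |].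
  specialize (Hk k (le_n k)).
  assert (HP : 0 < 3 ^ k) by (apply pow_lt; lra).
  rewrite Rabs_right in Hk by lra.
  set (P := 3 ^ k) in *.
  assert (HgP : 2 <= g * P).
  { replace 2 with (g * (2 / g)) by (field; lra). apply Rmult_le_compat_l; lra. }
  (* z is the integer part of P c, and u, v are the centres of the neighbouring middle thirds. *)
  destruct (archimed (P * c)) as [Hup1 Hup2].
  set (z := (up (P * c) - 1)%Z).
  assert (Hz : IZR z = IZR (up (P * c)) - 1) by (unfold z; rewrite minus_IZR; reflexivity).
  exists ((IZR z - / 2) / P), ((IZR z + 3 / 2) / P).
  split; [| split].
  - apply (not_cantor_mid_third k (z - 1)). fold P. rewrite minus_IZR. field. lra.
  - apply (not_cantor_mid_third k (z + 1)). fold P. rewrite plus_IZR. field. lra.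
  - assert (P * c - P * g < IZR z - / 2 < P * c) by lra.
    assert (P * c < IZR z + 3 / 2 < P * c + P * g) by lra.
    split; split;
      (apply (Rmult_lt_reg_l P); [exact HP |]; field_simplify; [lra | lra]).
Qed.

Lemma exists_pos_le a b : 0 < a -> 0 < b -> exists c, 0 < c /\ c <= a /\ c <= b.
Proof.
  intros Ha Hb. exists (Rmin a b).
  split; [apply Rmin_glb_lt | split; [apply Rmin_l | apply Rmin_r]]; assumption.
Qed.

Definition box (c : pt) (e : R) (q : pt) : Prop :=
  fst c - e < fst q < fst c + e /\ snd c - e < snd q < snd c + e.

Lemma box_center c e : 0 < e -> box c e c.
Proof. unfold box; lra. Qed.

Lemma open2_and U V : open2 U -> open2 V -> open2 (fun q => U q /\ V q).
Proof.
  intros HU HV p [Hu Hv].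
  destruct (HU p Hu) as [e1 [He1 H1]], (HV p Hv) as [e2 [He2 H2]].
  destruct (exists_pos_le e1 e2 He1 He2) as [e [He [Hle1 Hle2]]].
  exists e. split; [exact He |]. intros q Hq1 Hq2. split; [apply H1 | apply H2]; lra.
Qed.

Lemma open2_or U V : open2 U -> open2 V -> open2 (fun q => U q \/ V q).
Proof.
  intros HU HV p [Hu | Hv].
  - destruct (HU p Hu) as [e [He H]]. exists e. split; [exact He |]. intros; left; auto.
  - destruct (HV p Hv) as [e [He H]]. exists e. split; [exact He |]. intros; right; auto.
Qed.

Lemma open2_fst_lt u : open2 (fun q => fst q < u).
Proof.
  intros p Hp. exists (u - fst p). split; [lra |].
  intros q Hq _. apply Rabs_def2 in Hq. lra.
Qed.

Lemma open2_fst_gt u : open2 (fun q => u < fst q).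
Proof.
  intros p Hp. exists (fst p - u). split; [lra |].
  intros q Hq _. apply Rabs_def2 in Hq. lra.
Qed.

Lemma open2_snd_lt u : open2 (fun q => snd q < u).
Proof.
  intros p Hp. exists (u - snd p). split; [lra |].
  intros q _ Hq. apply Rabs_def2 in Hq. lra.
Qed.

Lemma open2_snd_gt u : open2 (fun q => u < snd q).
Proof.
  intros p Hp. exists (snd p - u). split; [lra |].
  intros q _ Hq. apply Rabs_def2 in Hq. lra.
Qed.

Lemma open2_box c e : open2 (box c e).
Proof.
  unfold box.
  repeat apply open2_and; auto using open2_fst_lt, open2_fst_gt, open2_snd_lt, open2_snd_gt.
Qed.

Lemma open2_box_inside U p : open2 U -> U p -> exists e, 0 < e /\ forall q, box p e q -> U q.
Proof.
  intros HU Hp. destruct (HU p Hp) as [e [He H]].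
  exists e. split; [exact He |]. intros q [Hq1 Hq2]. apply H; apply Rabs_def1; lra.
Qed.

Lemma open_in_box_inside S O p : open_in S O -> O p ->
  exists e, 0 < e /\ forall q, S q -> box p e q -> O q.
Proof.
  intros [HOS [U [HU HOU]]] Hp.
  destruct (open2_box_inside U p HU (proj2 (proj1 (HOU p) Hp))) as [e [He H]].
  exists e. split; [exact He |]. intros q Hq Hb. apply HOU. auto.
Qed.

Lemma nbhd_in_box_inside S N x : nbhd_in S N x ->
  exists e, 0 < e /\ forall q, S q -> box x e q -> N q.
Proof.
  intros [_ [_ [O [HO [Hx HON]]]]].
  destruct (open_in_box_inside S O x HO Hx) as [e [He H]].
  exists e. split; [exact He |]. auto.
Qed.

Lemma nbhd_in_box S x e : S x -> 0 < e -> nbhd_in S (fun q => S q /\ box x e q) x.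
Proof.
  intros Hx He. split; [exact Hx |]. split; [intros q []; assumption |].
  exists (fun q => S q /\ box x e q).
  split; [| split; [auto using box_center | intros q Hq; exact Hq]].
  split; [intros q []; assumption |].
  exists (box x e). split; [apply open2_box | tauto].
Qed.

Lemma clopen_in_box_outside S B p : clopen_in S B -> S p -> ~ B p ->
  exists e, 0 < e /\ forall q, S q -> box p e q -> ~ B q.
Proof.
  intros [_ [_ HC]] Hp Hnp.
  destruct (open_in_box_inside _ _ p HC (conj Hp Hnp)) as [e [He H]].
  exists e. split; [exact He |]. intros q Hq Hb. apply H; assumption.
Qed.

Lemma clopen_in_and S A B : clopen_in S A -> clopen_in S B -> clopen_in S (fun q => A q /\ B q).
Proof.
  intros [[HAS [UA [HUA HA]]] [_ [_ [VA [HVA HA']]]]] [[_ [UB [HUB HB]]] [_ [_ [VB [HVB HB']]]]].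
  split.
  - split; [intros q [Hq _]; exact (HAS q Hq) |].
    exists (fun q => UA q /\ UB q). split; [apply open2_and; assumption |].
    intro q. rewrite HA, HB. tauto.
  - split; [intros q [Hq _]; exact (HAS q Hq) |].
    split; [intros q []; assumption |].
    exists (fun q => VA q \/ VB q). split; [apply open2_or; assumption |].
    intro q. specialize (HA q); specialize (HB q); specialize (HA' q); specialize (HB' q).
    destruct (classic (S q)); tauto.
Qed.

Lemma clopen_in_window S B u v a b :
  clopen_in S B ->
  (forall z, S z -> fst z <> u /\ fst z <> v) ->
  (forall z, B z -> u < fst z < v -> snd z <> a /\ snd z <> b) ->
  clopen_in S (fun z => B z /\ u < fst z < v /\ a < snd z < b).
Proof.
  intros [[HBS [U [HU HBU]]] [_ [_ [V [HV HBV]]]]] Hsides Hlids.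
  assert (Hsub : subset (fun z => B z /\ u < fst z < v /\ a < snd z < b) S)
    by (intros z [Hz _]; exact (HBS z Hz)).
  split; split; try exact Hsub.
  - exists (fun z => U z /\ (u < fst z < v /\ a < snd z < b)). split.
    + repeat apply open2_and; auto using open2_fst_lt, open2_fst_gt, open2_snd_lt, open2_snd_gt.
    + intro z. rewrite HBU. tauto.
  - split; [intros z []; assumption |].
    exists (fun z => V z \/ (fst z < u \/ v < fst z) \/ (snd z < a \/ b < snd z)). split.
    + repeat apply open2_or; auto using open2_fst_lt, open2_fst_gt, open2_snd_lt, open2_snd_gt.
    + intro z. specialize (HBV z). split.
      * intros [Hz Hout]. split; [exact Hz |].
        destruct (classic (B z)) as [HB | HB]; [right | left; tauto].
        destruct (Hsides z Hz) as [Hu Hv].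
        apply Rdichotomy in Hu, Hv.
        destruct (Rlt_dec (fst z) u); [lra |].
        destruct (Rlt_dec v (fst z)); [lra |].
        destruct (Hlids z HB) as [Ha Hb]; [lra |].
        apply Rdichotomy in Ha, Hb.
        destruct (Rlt_dec (snd z) a); [lra |].
        destruct (Rlt_dec b (snd z)); [lra |].
        exfalso. apply Hout. repeat split; auto; lra.
      * intros [Hz Hout]. split; [exact Hz |]. intros [HB Hin].
        destruct Hout as [HVz | Hout]; [tauto | lra].
Qed.

Lemma C_set_in_separate S A y : C_set_in S A -> S y -> ~ A y ->
  exists B, clopen_in S B /\ subset A B /\ ~ B y.
Proof.
  intros [HAS [F [HF HA]]] Hy Hny.
  assert (Hex : exists B, F B /\ ~ B y).
  { apply NNPP. intro Hno. apply Hny, (HA y Hy). intros B HB.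
    apply NNPP. intro. apply Hno. exists B. auto. }
  destruct Hex as [B [HB Hn]]. exists B. split; [auto | split; [| exact Hn]].
  intros z Hz. apply (HA z (HAS z Hz)); assumption.
Qed.

Lemma closure_in_meets_box S A q e : closure_in S A q -> 0 < e ->
  exists x, S x /\ A x /\ box q e x.
Proof.
  intros [Hq Hcl] He. apply NNPP. intro Hno.
  set (F := fun z => S z /\ ~ box q e z).
  assert (HF : closed_in S F).
  { split; [intros z []; assumption |].
    split; [intros z []; assumption |].
    exists (box q e). split; [apply open2_box |].
    intro z. unfold F. split; [| tauto].
    intros [Hz Hn]. split; [exact Hz |]. apply NNPP. tauto. }
  assert (HAF : subset (fun z => S z /\ A z) F).
  { intros z [Hz Ha]. split; [exact Hz |]. intro Hb. apply Hno. exists z. auto. }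
  destruct (Hcl F HF HAF) as [_ Hn]. apply Hn, box_center, He.
Qed.

Definition dense_in_box (X : pt -> Prop) (c : pt) (r : R) : Prop :=
  forall q, CxR q -> box c r q -> forall e, 0 < e -> exists x, X x /\ box q e x.

Lemma interior_closure_dense_in_box X p :
  interior_in CxR (closure_in CxR X) p -> exists e, 0 < e /\ CxR p /\ dense_in_box X p e.
Proof.
  intros [O [HO [HOcl Hp]]].
  destruct (open_in_box_inside _ _ p HO Hp) as [e [He H]].
  exists e. split; [exact He | split; [exact (proj1 HO p Hp) |]].
  intros q Hq Hb e' He'.
  destruct (closure_in_meets_box CxR X q e' (HOcl q (H q Hq Hb)) He') as [x [_ [Hx Hbx]]].
  exists x. auto.
Qed.

Lemma dense_in_box_sub X c r c' r' :
  dense_in_box X c r -> (forall q, box c' r' q -> box c r q) -> dense_in_box X c' r'.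
Proof. intros Hd Hsub q Hq Hb. apply Hd; auto. Qed.

Lemma C_set_in_separate_box S A y : C_set_in S A -> S y -> ~ A y ->
  exists B g, clopen_in S B /\ subset A B /\ 0 < g /\ forall z, S z -> box y g z -> ~ B z.
Proof.
  intros HA Hy Hny.
  destruct (C_set_in_separate S A y HA Hy Hny) as [B [HB [HAB HnB]]].
  destruct (clopen_in_box_outside S B y HB Hy HnB) as [g [Hg Hcut]].
  exists B, g. auto.
Qed.

Lemma clopen_in_dense_box X x0 r :
  subset X CxR -> almost_zero_dimensional X -> X x0 -> 0 < r -> dense_in_box X x0 r ->
  exists B, clopen_in X B /\ subset B (box x0 r) /\ exists z, B z.
Proof.
  intros HXC Hazd Hx0 Hr Hdense.
  destruct (Hazd x0 _ (nbhd_in_box X x0 (r / 2) Hx0 ltac:(lra))) as [A [HA [HAx0 HAsub]]].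
  destruct (nbhd_in_box_inside _ _ _ HAx0) as [d [Hd HdA]].
  destruct (exists_pos_le (d / 4) (r / 8)) as [rho [Hrho [Hrd Hrr]]]; [lra | lra |].
  assert (Hcol : forall z h, X z -> CxR (fst z, h)) by (intros z h Hz; exact (HXC z Hz)).
  destruct (Hdense (fst x0, snd x0 + 3 * r / 4) (Hcol x0 _ Hx0)) with (e := rho)
    as [y [Hy Hyb]]; [unfold box; simpl; lra | exact Hrho |].
  destruct (C_set_in_separate_box X A y HA Hy) as [B1 [g1 [HB1 [HAB1 [Hg1 Hcut1]]]]].
  { intro Hay. destruct (HAsub y Hay) as [_ Hb]. unfold box in *; simpl in *; lra. }
  destruct (exists_pos_le rho (g1 / 2)) as [rho' [Hrho' [Hr'1 Hr'2]]]; [lra | lra |].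
  destruct (Hdense (fst y, snd x0 - 3 * r / 4) (Hcol y _ Hy)) with (e := rho')
    as [y' [Hy' Hy'b]]; [unfold box in *; simpl in *; lra | exact Hrho' |].
  destruct (C_set_in_separate_box X A y' HA Hy') as [B2 [g2 [HB2 [HAB2 [Hg2 Hcut2]]]]].
  { intro Hay. destruct (HAsub y' Hay) as [_ Hb]. unfold box in *; simpl in *; lra. }
  destruct (exists_pos_le g2 (g1 / 2)) as [g' [Hg' [Hg'2 Hg'1]]]; [lra | lra |].
  destruct (exists_pos_le g' rho) as [g [Hg [Hgg' Hgr]]]; [lra | lra |].
  destruct (not_cantor_on_both_sides (fst y') g Hg) as [u [v [Hu [Hv [Huy' Hvy']]]]].
  unfold box in Hyb, Hy'b; simpl in Hyb, Hy'b.
  exists (fun z => (B1 z /\ B2 z) /\ u < fst z < v /\ snd y' < snd z < snd y).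
  split; [| split].
  - apply clopen_in_window; [apply clopen_in_and; assumption | |].
    + intros z Hz. split; intro Heq; [apply Hu | apply Hv]; rewrite <- Heq; exact (HXC z Hz).
    + intros z [HzB1 HzB2] Hzuv. split; intro Heq.
      * apply (Hcut2 z (proj1 (proj1 HB2) z HzB2)); [unfold box; lra | exact HzB2].
      * apply (Hcut1 z (proj1 (proj1 HB1) z HzB1)); [unfold box; lra | exact HzB1].
  - intros z [_ [Hzuv Hzs]]. unfold box. lra.
  - destruct (exists_pos_le (fst y' - u) (v - fst y')) as [w [Hw [Hwu Hwv]]]; [lra | lra |].
    destruct (exists_pos_le w rho) as [e [He [Hew Her]]]; [lra | lra |].
    destruct (Hdense (fst y', snd x0) (Hcol y' _ Hy')) with (e := e)
      as [z [Hz Hzb]]; [unfold box; simpl; lra | exact He |].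
    unfold box in Hzb; simpl in Hzb.
    assert (HAz : A z) by (apply HdA; [exact Hz | unfold box; lra]).
    exists z. split; [split; auto | lra].
Qed.

Theorem theorem3p3 (X : pt -> Prop) :
  subset X CxR -> cohesive X -> almost_zero_dimensional X ->
  nowhere_dense_in CxR X.
Proof.
  intros HXC Hcoh Hazd p Hinterior.
  destruct (interior_closure_dense_in_box X p Hinterior) as [eps [Heps [Hp Hdense]]].
  destruct (Hdense p Hp (box_center p eps Heps) (eps / 2)) as [x0 [Hx0 Hx0p]]; [lra |].
  destruct (Hcoh x0 Hx0) as [N [HN Hno]].
  destruct (nbhd_in_box_inside _ _ _ HN) as [r0 [Hr0 HNbox]].
  destruct (exists_pos_le r0 (eps / 2)) as [r [Hr [Hrr0 Hreps]]]; [lra | lra |].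
  destruct (clopen_in_dense_box X x0 r HXC Hazd Hx0 Hr) as [B [HB [HBbox HBne]]].
  { apply (dense_in_box_sub X p eps); [exact Hdense |]. unfold box in *; intros q; lra. }
  apply (Hno B HB); [| exact HBne].
  intros z Hz. apply HNbox; [exact (proj1 (proj1 HB) z Hz) |].
  specialize (HBbox z Hz). unfold box in *; lra.
Qed.
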